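(* Let $G$ be a graph with parameters $(r_2,r_3)$ and let $e$ be an edge of $G$ with $K_3\deg(e)=k$. Then \[2r_3 \leq (r_2-k-1)(r_2-2) + k(k+1).\]
   Context: All graphs are finite, simple and undirected. For a vertex $v$, $K_3\deg(v)$ is the number of triangles of $G$ containing $v$; for an edge $uv$, $K_3\deg(uv)=|N(u)\cap N(v)|$ is the number of triangles containing the edge $uv$, where $N(\cdot)$ denotes the open neighbourhood. A graph $G$ has parameters $(r_2,r_3)$ if every vertex has degree $r_2$ and every vertex has $K_3$-degree $r_3$. *)

From mathcomp Require Import all_boot all_order all_algebra.
Set Implicit Arguments. Unset Strict Implicit. Unset Printing Implicit Defensive.

Definition simple_graph (T : finType) (g : rel T) : Prop :=
  symmetric g /\ irreflexive g.

Definition nbhd (T : finType) (g : rel T) (v : T) : {set T} := [set w | g v w].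

Definition deg (T : finType) (g : rel T) (v : T) : nat := #|nbhd g v|.

Definition is_triangle (T : finType) (g : rel T) (S : {set T}) : bool :=
  (#|S| == 3) && [forall x in S, forall y in S, (x != y) ==> g x y].

Definition K3deg (T : finType) (g : rel T) (v : T) : nat :=
  #|[set S : {set T} | is_triangle g S & v \in S]|.

Definition K3deg_edge (T : finType) (g : rel T) (u v : T) : nat :=
  #|nbhd g u :&: nbhd g v|.

Definition has_params (T : finType) (g : rel T) (r2 r3 : nat) : Prop :=
  forall v : T, deg g v = r2 /\ K3deg g v = r3.

(* Counting every triangle at u twice gives 2 K3deg(u) = sum over x in N(u)
   of |N(u) ∩ N(x)|.  Split N(u) into v, the k common neighbours C of u and v,
   and the d = r2 - 1 - k remaining vertices D(u).  A vertex x of D(u) sees in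
   N(u) only vertices of C and of D(u) \ {x}, and the C–D(u) edges can be
   counted from the C side instead.  Adding the same bound at v, for each c in C
   the sets N(u) ∩ N(c) and D(v) ∩ N(c) are disjoint in N(c) \ {u}, so together
   they contribute at most r2 - 1.  Hence 4 r3 <= 2k + 2k(r2 - 1) + 2d(d - 1),
   which rearranges to the claim. *)

From mathcomp Require Import all_boot all_order all_algebra.
From mathcomp Require Import zify.
Set Implicit Arguments.
Unset Strict Implicit.
Unset Printing Implicit Defensive.

Lemma card_setI_sum (T : finType) (A B : {set T}) :
  #|A :&: B| = \sum_(x in A) (x \in B).
Proof.
rewrite -sum1_card [LHS]big_mkcond [RHS]big_mkcond /=.
by apply: eq_bigr => x _; rewrite in_setI; case: (x \in A); case: (x \in B).
Qed.

Section TriangleCounting.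

Variables (T : finType) (g : rel T).
Hypotheses (g_sym : symmetric g) (g_irr : irreflexive g).

Definition common_nbhd u v : {set T} := nbhd g u :&: nbhd g v.

Definition excl_nbhd u v : {set T} := nbhd g u :\: nbhd g v :\ v.

Lemma adj_neq a b : g a b -> a != b.
Proof. by apply: contraTneq => ->; rewrite g_irr. Qed.

Lemma exchange_sum_card_nbhdI (A B : {set T}) :
  \sum_(x in A) #|B :&: nbhd g x| = \sum_(y in B) #|A :&: nbhd g y|.
Proof.
under eq_bigr do rewrite card_setI_sum.
under [RHS]eq_bigr do rewrite card_setI_sum.
rewrite exchange_big; apply: eq_bigr => y _; apply: eq_bigr => x _.
by rewrite !inE g_sym.
Qed.

Lemma triangle_adj S a b :
  is_triangle g S -> a \in S -> b \in S -> a != b -> g a b.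
Proof.
case/andP=> _ /forallP/(_ a)/implyP/[apply]/forallP/(_ b)/implyP/[apply].
exact: implyP.
Qed.

Lemma is_triangle3 a b c : g a b -> g b c -> g a c -> is_triangle g [set a; b; c].
Proof.
move=> gab gbc gac; apply/andP; split.
  rewrite setUC !cardsU1 cards1 !inE negb_or [c == a]eq_sym [c == b]eq_sym.
  by rewrite !adj_neq.
apply/forall_inP=> x xS; apply/forall_inP=> y yS; apply/implyP.
move: xS yS; rewrite !inE -!orbA => /or3P[]/eqP-> /or3P[]/eqP->;
by rewrite ?eqxx // 1?g_sym ?gab ?gbc ?gac // g_sym.
Qed.

Lemma nbhdI_triangle S w : is_triangle g S -> w \in S -> nbhd g w :&: S = S :\ w.
Proof.
move=> triS wS; apply/setP=> x; rewrite !inE.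
have [->|xw] := eqVneq x w; first by rewrite g_irr.
by case xS: (x \in S); rewrite ?andbF //= andbT (triangle_adj triS wS xS) // eq_sym.
Qed.

Lemma card_nbhdI_triangle S w :
  is_triangle g S -> w \in S -> #|nbhd g w :&: S| = 2.
Proof.
move=> triS wS; rewrite nbhdI_triangle //.
by move: (cardsD1 w S); case/andP: triS => /eqP-> _; rewrite wS => -[].
Qed.

Lemma triangles_on_edge w x : g w x ->
  [set S | is_triangle g S & (w \in S) && (x \in S)] =
  [set [set w; x; y] | y in common_nbhd w x].
Proof.
move=> gwx; apply/setP=> S; apply/idP/imsetP.
- rewrite inE => /andP[triS /andP[wS xS]].
  have wx := adj_neq gwx.
  have /cards1P[y Sy] : #|S :\ w :\ x| == 1.
    move: (cardsD1 w S) (cardsD1 x (S :\ w)); case/andP: (triS) => /eqP-> _.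
    by rewrite wS !inE (eq_sym x) wx xS; lia.
  have : y \in S :\ w :\ x by rewrite Sy set11.
  rewrite !inE => /and3P[yx yw yS].
  exists y; first by rewrite !inE !(triangle_adj triS) // eq_sym.
  by rewrite -Sy -setUA !setD1K // !inE xS andbT eq_sym.
- case=> y; rewrite !inE => /andP[gwy gxy] ->.
  by rewrite is_triangle3 // !inE !eqxx orbT.
Qed.

Lemma card_triangles_on_edge w x : g w x ->
  #|[set S | is_triangle g S & (w \in S) && (x \in S)]| = #|common_nbhd w x|.
Proof.
move=> gwx; rewrite triangles_on_edge // card_in_imset // => y1 y2.
rewrite !inE => /andP[gwy1 gxy1] _ eqS.
have : y1 \in [set w; x; y2] by rewrite -eqS !inE eqxx !orbT.
rewrite !inE -orbA => /or3P[]/eqP// y1E.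
  by move: gwy1; rewrite y1E g_irr.
by move: gxy1; rewrite y1E g_irr.
Qed.

Lemma double_K3deg w :
  2 * K3deg g w = \sum_(x in nbhd g w) #|common_nbhd w x|.
Proof.
set Tw := [set S | is_triangle g S & w \in S].
have triangles_through x : x \in nbhd g w ->
    #|common_nbhd w x| = \sum_(S in Tw) (x \in S).
  rewrite inE => gwx; rewrite -card_triangles_on_edge //.
  have -> : [set S : {set T} | is_triangle g S & (w \in S) && (x \in S)] =
            Tw :&: [set S : {set T} | x \in S] by apply/setP=> S; rewrite !inE andbA.
  by rewrite card_setI_sum; apply: eq_bigr => S _; rewrite inE.
rewrite (eq_bigr _ triangles_through) exchange_big /= /K3deg -/Tw.
rewrite mulnC -sum_nat_const; apply: eq_bigr => S.
by rewrite inE => /andP[triS wS]; rewrite -card_setI_sum card_nbhdI_triangle.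
Qed.

Lemma common_nbhdC u v : common_nbhd u v = common_nbhd v u.
Proof. exact: setIC. Qed.

Lemma card_nbhd_edge u v : g u v ->
  #|nbhd g u| = (#|common_nbhd u v| + #|excl_nbhd u v|).+1.
Proof.
move=> guv; rewrite -(cardsID (nbhd g v) (nbhd g u)).
by rewrite (cardsD1 v (nbhd g u :\: nbhd g v)) !inE g_irr guv addnS.
Qed.

Lemma card_nbhdI_excl_le u v x : x \in excl_nbhd u v ->
  #|common_nbhd u x| <= #|common_nbhd u v :&: nbhd g x| + #|excl_nbhd u v|.-1.
Proof.
move=> xD; have := xD; rewrite !inE => /and3P[xv gvx gux].
rewrite (cardsD1 x (excl_nbhd u v)) xD add1n /=.
apply: leq_trans (leq_card_setU _ _); apply: subset_leq_card.
apply/subsetP=> y; rewrite !inE => /andP[guy gxy].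
rewrite guy gxy /=; case: (g v y) => //=; rewrite andbT.
apply/andP; split; apply: contraTneq gxy => ->; first by rewrite g_irr.
by rewrite g_sym gvx.
Qed.

Lemma double_K3deg_le u v : g u v ->
  2 * K3deg g u <= #|common_nbhd u v|
    + \sum_(c in common_nbhd u v) #|common_nbhd u c|
    + \sum_(c in common_nbhd u v) #|excl_nbhd u v :&: nbhd g c|
    + #|excl_nbhd u v| * #|excl_nbhd u v|.-1.
Proof.
move=> guv; rewrite double_K3deg (big_setID (nbhd g v)) /=.
rewrite (big_setD1 v (A := nbhd g u :\: nbhd g v)) ?inE ?g_irr ?guv //=.
rewrite -/(excl_nbhd u v) -/(common_nbhd u v).
have excl_sum_le : \sum_(x in excl_nbhd u v) #|common_nbhd u x| <=
    \sum_(c in common_nbhd u v) #|excl_nbhd u v :&: nbhd g c|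
    + #|excl_nbhd u v| * #|excl_nbhd u v|.-1.
  rewrite (exchange_sum_card_nbhdI (common_nbhd u v)) -sum_nat_const -big_split /=.
  by apply: leq_sum => x /card_nbhdI_excl_le.
lia.
Qed.

Lemma card_nbhdI_excl_deg_le u v c : g u c ->
  #|common_nbhd u c| + #|excl_nbhd v u :&: nbhd g c| <= (deg g c).-1.
Proof.
move=> guc.
have disjoint : common_nbhd u c :&: (excl_nbhd v u :&: nbhd g c) = set0.
  by apply/setP=> y; rewrite !inE; case: (g u y); rewrite ?andbF.
rewrite -cardsUI disjoint cards0 addn0.
rewrite /deg (cardsD1 u (nbhd g c)) inE g_sym guc /=.
apply: subset_leq_card; apply/subsetP=> y; rewrite !inE.
case/orP=> /andP[gy gcy]; rewrite gcy andbT; last by case/and3P: gy.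
by apply: contraTneq gy => ->; rewrite g_irr.
Qed.

Lemma K3deg_add_le u v : g u v ->
  2 * K3deg g u + 2 * K3deg g v <=
  2 * #|common_nbhd u v| + 2 * \sum_(c in common_nbhd u v) (deg g c).-1
  + #|excl_nbhd u v| * #|excl_nbhd u v|.-1 + #|excl_nbhd v u| * #|excl_nbhd v u|.-1.
Proof.
move=> guv; have gvu : g v u by rewrite g_sym.
have := double_K3deg_le guv; have := double_K3deg_le gvu.
rewrite -common_nbhdC.
have pair_le w w' : common_nbhd u v \subset nbhd g w ->
    \sum_(c in common_nbhd u v) #|common_nbhd w c|
    + \sum_(c in common_nbhd u v) #|excl_nbhd w' w :&: nbhd g c|
    <= \sum_(c in common_nbhd u v) (deg g c).-1.
  move=> /subsetP sub; rewrite -big_split; apply: leq_sum => c /sub.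
  by rewrite inE => /card_nbhdI_excl_deg_le.
have := pair_le u v (subsetIl _ _); have := pair_le v u (subsetIr _ _).
lia.
Qed.

End TriangleCounting.

Local Open Scope ring_scope.

Theorem lemma3p4 (T : finType) (g : rel T) (r2 r3 : nat) (u v : T) (k : nat) :
  simple_graph g -> has_params g r2 r3 -> g u v -> K3deg_edge g u v = k ->
  2 * (r3%:Z) <= (r2%:Z - k%:Z - 1) * (r2%:Z - 2) + k%:Z * (k%:Z + 1).
Proof.
move=> [g_sym g_irr] params guv {k}<-.
have gvu : g v u by rewrite g_sym.
have deg_r2 c : deg g c = r2 by have [] := params c.
have [_ K3_u] := params u; have [_ K3_v] := params v.
have := K3deg_add_le g_sym g_irr guv.
rewrite (eq_bigr (fun=> r2.-1)) => [|c _]; last by rewrite deg_r2.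
rewrite sum_nat_const K3_u K3_v.
have := card_nbhd_edge g_irr guv; have := card_nbhd_edge g_irr gvu.
rewrite -common_nbhdC /K3deg_edge -/(common_nbhd g u v) -!/(deg g _) !deg_r2.
move: #|common_nbhd g u v| #|excl_nbhd g u v| #|excl_nbhd g v u| => k d d' -> /eqP.
rewrite eqSS eqn_add2l => /eqP -> le4.
have {le4} le2 : (2 * r3 <= k * (k + d).+1 + d * d.-1)%N by lia.
case: d le2 => [|d] /=; nia.
Qed.
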